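(* Let $\alpha\geq1$ and $\phi(x):=(1+|x|^2)^{-\alpha}$ on $\mathbb{R}^3$. Then there is a constant $C$ such that for every $x,y\in\mathbb{R}^3$, $$\sup_{s\in[0,1]}|\nabla\phi(x-sy)|\leq C\alpha(1+|y|^{2\alpha})|\phi(x)|.$$ *)

From HB Require Import structures.
From mathcomp Require Import all_boot all_order all_algebra.
From mathcomp Require Import all_classical all_reals all_analysis.
Set Implicit Arguments. Unset Strict Implicit. Unset Printing Implicit Defensive.
Import Order.TTheory GRing.Theory Num.Theory.
Import numFieldNormedType.Exports.
Local Open Scope ring_scope.

(* Euclidean norm |v| on R^3 (the library norm on matrices is the sup-norm). *)
Definition enorm {R : realType} (v : 'rV[R]_3) : R :=
  Num.sqrt (\sum_(i < 3) (v ord0 i) ^+ 2).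

Definition phi {R : realType} (alpha : R) (x : 'rV[R]_3) : R :=
  (1 + enorm x ^+ 2) `^ (- alpha).

Definition grad_norm {R : realType} (f : 'rV[R]_3 -> R) (z : 'rV[R]_3) : R :=
  Num.sqrt (\sum_(i < 3) ('D_(delta_mx ord0 i) f z) ^+ 2).

From HB Require Import structures.
From mathcomp Require Import all_boot all_order all_algebra.
From mathcomp Require Import all_classical all_reals all_analysis.
From mathcomp Require Import ring lra.
Import Order.TTheory GRing.Theory Num.Theory.
Import numFieldNormedType.Exports.
Local Open Scope ring_scope.

(** Writing [q z = 1 + |z|^2], the partial derivatives of [phi = q^(-alpha)]
are [-2 alpha z_i q^(-alpha-1)], and [2 |z_i| <= q] bounds each of them by
[alpha phi]; hence [|grad phi (x - s y)| <= 2 alpha phi (x - s y)].  Peetre's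
inequality [1 + |x|^2 <= 2 (1 + |x - w|^2) (1 + |w|^2)] with [w = s y] moves
the point back to [x] at the price of [2^alpha (1 + |y|^2)^alpha], and
[(1 + Y)^alpha <= 2^alpha (1 + Y^alpha)] finishes the estimate. *)

Section SquaredNorm.
Context {R : realType} {n : nat}.
Implicit Types (v w : 'rV[R]_n) (s t : R).

Definition sqnorm v : R := \sum_(i < n) v ord0 i ^+ 2.

Lemma sqnorm_ge0 v : 0 <= sqnorm v.
Proof. by apply: sumr_ge0 => i _; exact: sqr_ge0. Qed.

Lemma sqr_coord_le_sqnorm v i : v ord0 i ^+ 2 <= sqnorm v.
Proof.
by rewrite /sqnorm (bigD1 i) //= lerDl; apply: sumr_ge0 => j _; exact: sqr_ge0.
Qed.

Lemma sqnormD_le v w : sqnorm (v + w) <= 2 * sqnorm v + 2 * sqnorm w.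
Proof.
rewrite /sqnorm !mulr_sumr -big_split /=; apply: ler_sum => j _.
by rewrite mxE; have := sqr_ge0 (v ord0 j - w ord0 j); nra.
Qed.

Lemma sqnormZ_le s v : s ^+ 2 <= 1 -> sqnorm (s *: v) <= sqnorm v.
Proof.
move=> s1; apply: ler_sum => j _.
by rewrite mxE exprMn ler_piMl ?sqr_ge0.
Qed.

Lemma sqnorm_shift_delta i t v :
  sqnorm (t *: delta_mx ord0 i + v) =
  \sum_(j < n | j != i) v ord0 j ^+ 2 + (t + v ord0 i) ^+ 2.
Proof.
rewrite /sqnorm (bigD1 i) //= addrC; congr (_ + _).
  by apply: eq_bigr => j ji; rewrite !mxE (negbTE ji) mulr0 add0r.
by rewrite !mxE !eqxx mulr1.
Qed.

Lemma peetre_sqnorm v w :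
  1 + sqnorm v <= 2 * (1 + sqnorm (v - w)) * (1 + sqnorm w).
Proof.
have := sqnormD_le (v - w) w; rewrite subrK.
have := sqnorm_ge0 (v - w); have := sqnorm_ge0 w; nra.
Qed.

End SquaredNorm.

Lemma sqr_enorm {R : realType} (v : 'rV[R]_3) : enorm v ^+ 2 = sqnorm v.
Proof. by rewrite sqr_sqrtr // sqnorm_ge0. Qed.

Lemma powR_1addr_le {R : realType} (Y a : R) : 0 <= Y -> 0 <= a ->
  (1 + Y) `^ a <= 2 `^ a * (1 + Y `^ a).
Proof.
move=> Y0 a0; have t0 := powR_ge0 2 a; have y0 := powR_ge0 Y a.
have [Y1 | Y1] := lerP Y 1.
  apply: (@le_trans _ _ (2 `^ a)); last by nra.
  by apply: ge0_ler_powR => //; rewrite ?qualifE /=; lra.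
apply: (@le_trans _ _ ((2 * Y) `^ a)).
  by apply: ge0_ler_powR => //; rewrite ?qualifE /=; lra.
by rewrite powRM //; nra.
Qed.

Lemma derive_along_line {R : numFieldType} (V W : normedModType R)
    (f : V -> W) (v z : V) :
  'D_v f z = 'D_1 (fun t : R => f (t *: v + z)) 0.
Proof.
rewrite /derive; set a := (fun _ => _); set b := (fun _ => _).
suff -> : a = b by [].
by apply/funext => h; rewrite /a /b /= scale0r add0r [h *: (1 : R)]mulr1 addr0.
Qed.

Lemma grad_norm_le {R : realType} (f : 'rV[R]_3 -> R) z (B : R) :
  (forall i, `|'D_(delta_mx ord0 i) f z| <= B) -> grad_norm f z <= 2 * B.
Proof.
move=> fB; have B0 : 0 <= B := le_trans (normr_ge0 _) (fB ord0).
have sqr_le i : ('D_(delta_mx ord0 i) f z) ^+ 2 <= B ^+ 2.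
  by rewrite -real_normK ?num_real // lerXn2r ?nnegrE.
rewrite /grad_norm -(ger0_norm (_ : 0 <= 2 * B)) ?mulr_ge0 //.
rewrite -sqrtr_sqr ler_sqrt ?sqr_ge0 //.
apply: le_trans (ler_sum _ (fun i _ => sqr_le i)) _.
by rewrite sumr_const card_ord -mulr_natr; nra.
Qed.

Section Phi.
Context {R : realType} {alpha : R}.
Implicit Types (x w z : 'rV[R]_3).

Lemma phiE z : phi alpha z = (1 + sqnorm z) `^ (- alpha).
Proof. by rewrite /phi sqr_enorm. Qed.

Lemma phi_ge0 z : 0 <= phi alpha z.
Proof. exact: powR_ge0. Qed.

Lemma partial_phiE z i :
  'D_(delta_mx ord0 i) (phi alpha) z =
  - alpha * (1 + sqnorm z) `^ (- alpha - 1) * (2 * z ord0 i).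
Proof.
rewrite derive_along_line.
set c := 1 + \sum_(j < 3 | j != i) z ord0 j ^+ 2.
set q := fun t : R => c + (t + z ord0 i) ^+ 2.
have qE : 1 + sqnorm z = q 0.
  rewrite /q -[z in LHS]add0r -(scale0r (delta_mx ord0 i)).
  by rewrite sqnorm_shift_delta addrA.
have -> : (fun t => phi alpha (t *: delta_mx ord0 i + z)) =
          (fun r : R => r `^ (- alpha)) \o q.
  by apply/funext => t; rewrite /= phiE sqnorm_shift_delta addrA.
have q'0 : is_derive (0 : R) 1 q (2 * z ord0 i).
  apply: is_derive_eq.
  rewrite !(add0r, addr0, mul1r) -[z ord0 i *: 1]/(z ord0 i * 1) mulr1.
  by rewrite -mulr2n mulr_natl.
have q0_gt0 : 0 < q 0 by rewrite -qE ltr_wpDr ?sqnorm_ge0.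
rewrite qE; apply: derive.derive_val.
exact: is_derive1_comp (is_derive1_powR _ q0_gt0) q'0.
Qed.

Hypothesis alpha_ge0 : 0 <= alpha.

Lemma partial_phi_le z i :
  `|'D_(delta_mx ord0 i) (phi alpha) z| <= alpha * phi alpha z.
Proof.
rewrite partial_phiE phiE; set q := 1 + sqnorm z.
have q_ge1 : 1 <= q by rewrite lerDl sqnorm_ge0.
have q_gt0 : 0 < q by apply: lt_le_trans q_ge1.
(* [2 |z_i| <= 1 + z_i^2 <= q] *)
have zi_le : 2 * `|z ord0 i| <= q.
  have := sqr_coord_le_sqnorm z i; rewrite /q -real_normK ?num_real //.
  have := normr_ge0 (z ord0 i); have := sqr_ge0 (`|z ord0 i| - 1); nra.
have -> : q `^ (- alpha) = q `^ (- alpha - 1) * q.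
  rewrite -{3}(powRr1 (ltW q_gt0)) -powRD ?(gt_eqF q_gt0) ?implybT //.
  by congr (_ `^ _); ring.
rewrite !normrM normrN (ger0_norm alpha_ge0) ger0_norm ?powR_ge0 //.
by rewrite ger0_norm // -mulrA ler_wpM2l // ler_wpM2l ?powR_ge0.
Qed.

Lemma grad_norm_phi_le z : grad_norm (phi alpha) z <= 2 * alpha * phi alpha z.
Proof. by rewrite -mulrA; apply: grad_norm_le => i; exact: partial_phi_le. Qed.

Lemma phi_sub_le x w :
  phi alpha (x - w) <= 2 `^ alpha * (1 + sqnorm w) `^ alpha * phi alpha x.
Proof.
have := peetre_sqnorm x w; rewrite !phiE !powRN.
set A := 1 + sqnorm x; set B := 1 + sqnorm (x - w); set K := 1 + sqnorm w.
have A_ge1 : 1 <= A by rewrite lerDl sqnorm_ge0.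
have B_ge1 : 1 <= B by rewrite lerDl sqnorm_ge0.
have K_ge1 : 1 <= K by rewrite lerDl sqnorm_ge0.
move=> peetre; have Aa_gt0 : 0 < A `^ alpha by apply: powR_gt0; lra.
have Ba_gt0 : 0 < B `^ alpha by apply: powR_gt0; lra.
rewrite ler_pdivlMr // mulrC ler_pdivrMr // mulrC -!powRM; try lra.
by apply: ge0_ler_powR => //; rewrite ?nnegrE; nra.
Qed.

End Phi.

Theorem lemmaA1 (R : realType) (alpha : R) (halpha : 1 <= alpha) :
  exists C : R, forall (x y : 'rV[R]_3) (s : R), 0 <= s <= 1 ->
    grad_norm (phi alpha) (x - s *: y)
      <= C * alpha * (1 + enorm y `^ (2 * alpha)) * `|phi alpha x|.
Proof.
have alpha_ge0 : 0 <= alpha by lra.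
exists (2 * 2 `^ alpha * 2 `^ alpha) => x y s /andP[s_ge0 s_le1].
have -> : enorm y `^ (2 * alpha) = sqnorm y `^ alpha.
  by rewrite powRrM powR_mulrn ?sqr_enorm ?sqrtr_ge0.
rewrite ger0_norm ?phi_ge0 //.
apply: le_trans (grad_norm_phi_le alpha_ge0 _) _.
rewrite [leRHS](_ : _ = 2 * alpha *
  (2 `^ alpha * (2 `^ alpha * (1 + sqnorm y `^ alpha)) * phi alpha x));
  last by ring.
rewrite ler_wpM2l ?mulr_ge0 //.
apply: le_trans (phi_sub_le alpha_ge0 x (s *: y)) _.
rewrite ler_wpM2r ?phi_ge0 // ler_wpM2l ?powR_ge0 //.
apply: le_trans _ (powR_1addr_le _ _ (sqnorm_ge0 y) alpha_ge0).
apply: ge0_ler_powR; rewrite ?nnegrE ?addr_ge0 ?sqnorm_ge0 //.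
by rewrite lerD2l sqnormZ_le //; nra.
Qed.
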